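(* Let $N$ be an odd positive integer and $r\ge s\ge2$. The transfer homomorphism $V:(\Phi_r^s)^{\mathrm{ab}}\to\Gamma_1(N2^r)^{\mathrm{ab}}$ associated to the finite-index subgroup $\Gamma_1(N2^r)\subseteq\Phi_r^s$ commutes with the action of the Atkin operator $U$ on its source and target.
   Context: For $M\ge1$, $\Gamma_1(M)=\{\begin{pmatrix}a&b\\c&d\end{pmatrix}\in\mathrm{SL}_2(\mathbb{Z}) : c\equiv0,\ a\equiv d\equiv1 \pmod M\}$, $\Gamma_0(M)=\{c\equiv 0\pmod M\}$, $\Gamma^0(2)=\{b\equiv0\pmod 2\}$ (inside $\mathrm{SL}_2(\mathbb{Z})$). For $r\ge s\ge2$, $\Phi_r^s:=\Gamma_1(N2^s)\cap\Gamma_0(2^r)$, so $\Phi_r^r=\Gamma_1(N2^r)$; $G^{\mathrm{ab}}$ denotes abelianization. With $t=\begin{pmatrix}1&0\\0&2\end{pmatrix}$, the Atkin operator $U$ on $(\Phi_r^s)^{\mathrm{ab}}$ (for any $r\ge s\ge 2$) is the composite of the transfer $(\Phi_r^s)^{\mathrm{ab}}\to(\Phi_r^s\cap\Gamma^0(2))^{\mathrm{ab}}$, the map induced by the isomorphism $x\mapsto txt^{-1}$ from $\Phi_r^s\cap\Gamma^0(2)$ onto $\Phi_{r+1}^s$, and the inclusion-induced map $(\Phi_{r+1}^s)^{\mathrm{ab}}\to(\Phi_r^s)^{\mathrm{ab}}$. *)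

From mathcomp Require Import all_boot all_order all_algebra.
Set Implicit Arguments. Unset Strict Implicit. Unset Printing Implicit Defensive.
Import Order.TTheory GRing.Theory Num.Theory.
Local Open Scope ring_scope.

Notation mat := ('M[int]_2).

Definition ea (A : mat) : int := A 0 0.
Definition eb (A : mat) : int := A 0 1.
Definition ec (A : mat) : int := A 1 0.
Definition ed (A : mat) : int := A 1 1.

Definition SL2 (A : mat) : bool := \det A == 1.

Definition Gamma1 (M : nat) (A : mat) : bool :=
  [&& SL2 A, (M%:Z %| ec A)%Z, (ea A == 1 %[mod M%:Z])%Z & (ed A == 1 %[mod M%:Z])%Z].

Definition Gamma0 (M : nat) (A : mat) : bool := SL2 A && (M%:Z %| ec A)%Z.

Definition Gamma0up2 (A : mat) : bool := SL2 A && (2 %| eb A)%Z.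

Definition Phi (N r s : nat) (A : mat) : bool :=
  Gamma1 (N * 2 ^ s) A && Gamma0 (2 ^ r) A.

Definition capG02 (G : pred mat) : pred mat := fun A => G A && Gamma0up2 A.

Definition is_rtransversal (G H : pred mat) (ts : seq mat) : Prop :=
  (forall t, t \in ts -> G t) /\
  (forall g, G g -> exists! i : nat, (i < size ts)%N /\ H (g *m invmx (nth 1%:M ts i))).

(* Transfer G -> H on representatives, w.r.t. the right transversal ts:
   for each t_i, t_i g = h_i t_{sigma(i)} with h_i in H, and V(g) = prod h_i
   (product taken in H, hence well defined modulo [H,H]). *)
Definition transfer (H : pred mat) (ts : seq mat) (g : mat) : mat :=
  \big[mulmx/1%:M]_(t <- ts)
     (t *m g *m invmx (nth 1%:M ts (find (fun u => H (t *m g *m invmx u)) ts))).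

(* Conjugation x |-> t x t^{-1} with t = diag(1,2): entry (i,j) is
   t_i * x_ij / t_j  (integral when x is in Gamma^0(2)). *)
Definition tdiag (i : 'I_2) : int := if i == 0 then 1 else 2.
Definition conjt (A : mat) : mat :=
  \matrix_(i, j) ((tdiag i * A i j) %/ tdiag j)%Z.
Definition tmx : mat := \matrix_(i, j) (if i == j then tdiag i else 0).

Lemma conjtE (A : mat) : (2 %| eb A)%Z -> tmx *m A = conjt A *m tmx.
Proof.
move=> hb; apply/matrixP => i j.
have E : forall k : 'I_2, k = 0 \/ k = 1.
  move=> [[|[|k]] Hk]; [left|right|] => //; by apply: val_inj.
have L : lift ord0 ord0 = 1 :> 'I_2 by apply: val_inj.
rewrite !mxE !big_ord_recl big_ord0 !mxE /tdiag /=.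
move: hb; rewrite /eb => hb.
case: (E i) => ->; case: (E j) => -> /=;
  rewrite ?mul1r ?mulr1 ?mul0r ?mulr0 ?add0r ?addr0 ?divz1 big_ord0 ?addr0 ?L //.
- by rewrite divzK.
- by rewrite mulKz // mulrC.
Qed.

(* Atkin operator on representatives: transfer G -> G \cap Gamma^0(2),
   then x |-> t x t^{-1}, then inclusion (identity on representatives). *)
Definition atkin (G : pred mat) (ts : seq mat) (g : mat) : mat :=
  conjt (transfer (capG02 G) ts g).

Inductive commsub (H : pred mat) : mat -> Prop :=
| cs_comm x y : H x -> H y -> commsub H (x *m y *m invmx x *m invmx y)
| cs_one : commsub H 1%:M
| cs_mul x y : commsub H x -> commsub H y -> commsub H (x *m y)
| cs_inv x : commsub H x -> commsub H (invmx x).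

(* equality in H^ab of (the classes of) x and y *)
Definition abeq (H : pred mat) (x y : mat) : Prop := commsub H (x *m invmx y).

(* Write Gamma for Gamma_1(N 2^r), P for Phi_r^s \cap Gamma^0(2) and K for
   Gamma \cap Gamma^0(2).  Since transfer is transitive and independent of the
   transversal, both V_{K<-Gamma} o V_{Gamma<-Phi} and V_{K<-P} o V_{P<-Phi} are the
   transfer Phi -> K^ab.  Multiplying a transversal of Gamma in Phi on the left by
   suitable powers of T = (1 1; 0 1) puts it inside Gamma^0(2); it is then also a
   transversal of K in P, and conjugation by t = diag(1, 2), which fixes the entry d,
   maps it to another transversal of Gamma in Phi, because for N odd the right
   Gamma-cosets of Phi are determined by d.  Hence conjugation by t intertwines
   V_{K<-P} with V_{Gamma<-Phi}, and U o V = V o U follows. *)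

From mathcomp Require Import all_boot all_order all_algebra.
From mathcomp Require Import ring.
Set Implicit Arguments. Unset Strict Implicit. Unset Printing Implicit Defensive.
Import GRing.Theory.
Local Open Scope ring_scope.

Definition is_subgroup (G : pred mat) :=
  [/\ G 1, (forall x y, G x -> G y -> G (x * y)),
      (forall x, G x -> G x^-1) & (forall x, G x -> x \is a GRing.unit)].

Section Subgroup.

Variable G : pred mat.
Hypothesis gG : is_subgroup G.

Lemma subgroup1 : G 1. Proof. by case: gG. Qed.

Lemma subgroupM x y : G x -> G y -> G (x * y). Proof. by case: gG => _ + _ _; apply. Qed.

Lemma subgroupV x : G x -> G x^-1. Proof. by case: gG => _ _ + _; apply. Qed.

Lemma subgroup_unit x : G x -> x \is a GRing.unit. Proof. by case: gG => _ _ _; apply. Qed.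

Lemma subgroup_mulV x y : G x -> G y -> G (x * y^-1).
Proof. by move=> Gx Gy; rewrite subgroupM ?subgroupV. Qed.

Lemma subgroup_prod (I : eqType) (s : seq I) (F : I -> mat) :
  (forall i, i \in s -> G (F i)) -> G (\prod_(i <- s) F i).
Proof.
elim: s => [|i s IHs] Fs; first by rewrite big_nil subgroup1.
by rewrite big_cons subgroupM ?Fs ?mem_head // IHs // => j sj; rewrite Fs // inE sj orbT.
Qed.

End Subgroup.

Lemma is_subgroupI (G H : pred mat) :
  is_subgroup G -> is_subgroup H -> is_subgroup (fun A => G A && H A).
Proof.
move=> gG gH; split.
- by rewrite !subgroup1.
- by move=> x y /andP [Gx Hx] /andP [Gy Hy]; rewrite !subgroupM.
- by move=> x /andP [Gx Hx]; rewrite !subgroupV.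
- by move=> x /andP [Gx _]; apply: subgroup_unit gG x Gx.
Qed.

Section Abelianization.

Variable H : pred mat.
Hypothesis gH : is_subgroup H.

Lemma commsub_mem z : commsub H z -> H z.
Proof.
elim=> {z} [x y Hx Hy | | x y _ Hx _ Hy | x _ Hx].
- by rewrite !subgroup_mulV // subgroupM.
- exact: subgroup1.
- exact: subgroupM.
- exact: subgroupV.
Qed.

Lemma commsub_conj c z : H c -> commsub H z -> commsub H (c * z * c^-1).
Proof.
move=> Hc; have uc := subgroup_unit gH Hc.
have conjV x : x \is a GRing.unit -> (c * x * c^-1)^-1 = c * x^-1 * c^-1.
  by move=> ux; rewrite !invrM ?unitrMl ?unitrV // invrK mulrA.
have conjM x y : c * (x * y) * c^-1 = (c * x * c^-1) * (c * y * c^-1).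
  by rewrite !mulrA divrK.
have Hconj x : H x -> H (c * x * c^-1) by move=> Hx; rewrite subgroup_mulV ?subgroupM.
elim=> {z} [x y Hx Hy | | x y _ cx _ cy | x zx cx].
- have [ux uy] := (subgroup_unit gH Hx, subgroup_unit gH Hy).
  rewrite (conjM (x * y * _)) (conjM (x * y)) conjM -(conjV x) // -(conjV y) //.
  exact: cs_comm (Hconj _ Hx) (Hconj _ Hy).
- by rewrite mulr1 mulrV //; exact: cs_one.
- by rewrite conjM; exact: cs_mul.
- rewrite -conjV; first exact: cs_inv.
  exact: (subgroup_unit gH (commsub_mem zx)).
Qed.

Lemma abeq_refl x : H x -> abeq H x x.
Proof. by move=> Hx; rewrite /abeq -/(x * x^-1) mulrV ?(subgroup_unit gH Hx) //; exact: cs_one. Qed.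

Lemma abeq_sym x y : H x -> H y -> abeq H x y -> abeq H y x.
Proof.
move=> Hx Hy xy; rewrite /abeq -/(y * x^-1).
have -> : y * x^-1 = (x * y^-1)^-1 by rewrite invrM ?unitrV ?(subgroup_unit gH) // invrK.
exact: cs_inv.
Qed.

Lemma abeq_trans y x z : H y -> abeq H x y -> abeq H y z -> abeq H x z.
Proof.
move=> Hy xy yz; rewrite /abeq -/(x * z^-1).
have -> : x * z^-1 = (x * y^-1) * (y * z^-1) by rewrite mulrA divrK ?(subgroup_unit gH).
exact: cs_mul.
Qed.

Lemma abeqM x y x' y' : H x' -> H y' ->
  abeq H x x' -> abeq H y y' -> abeq H (x * y) (x' * y').
Proof.
move=> Hx' Hy' xx' yy'; rewrite /abeq -/((x * y) * (x' * y')^-1).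
have ux' := subgroup_unit gH Hx'; have uy' := subgroup_unit gH Hy'.
have -> : x * y * (x' * y')^-1 = (x * x'^-1) * (x' * (y * y'^-1) * x'^-1).
  by rewrite invrM // !mulrA divrK.
exact: cs_mul xx' (commsub_conj Hx' yy').
Qed.

Lemma abeq_mulC x y : H x -> H y -> abeq H (x * y) (y * x).
Proof.
move=> Hx Hy; rewrite /abeq -/((x * y) * (y * x)^-1).
by rewrite invrM ?(subgroup_unit gH) // mulrA; exact: cs_comm.
Qed.

Lemma abeq_mull x y y' : H x -> H y' -> abeq H y y' -> abeq H (x * y) (x * y').
Proof. by move=> Hx Hy'; apply: abeqM => //; apply: abeq_refl. Qed.

Lemma abeq_mulr x x' y : H x' -> H y -> abeq H x x' -> abeq H (x * y) (x' * y).
Proof. by move=> Hx' Hy xx'; apply: abeqM => //; apply: abeq_refl. Qed.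

Section Products.

Variables (I : eqType) (F G : I -> mat).

Lemma abeq_perm (s1 s2 : seq I) : perm_eq s1 s2 -> {in s1, forall i, H (F i)} ->
  abeq H (\prod_(i <- s1) F i) (\prod_(i <- s2) F i).
Proof.
elim: s1 s2 => [|i s IHs] s2 eq_s.
  move: eq_s; rewrite perm_sym => /perm_nilP -> _.
  by rewrite big_nil; exact: abeq_refl (subgroup1 gH).
have s2i : i \in s2 by rewrite -(perm_mem eq_s) mem_head.
case/splitPr: s2i eq_s => s21 s22 eq_s.
have {}eq_s : perm_eq s (s21 ++ s22).
  by rewrite -(perm_cons i); apply: perm_trans eq_s _; rewrite -[i :: s22]cat1s perm_catCA.
move=> Fs.
have Fs' : {in s, forall j, H (F j)} by move=> j sj; rewrite Fs // inE sj orbT.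
have Fs21 j : j \in s21 ++ s22 -> H (F j) by rewrite -(perm_mem eq_s); apply: Fs'.
have [Hp1 Hp2] : H (\prod_(j <- s21) F j) /\ H (\prod_(j <- s22) F j).
  by split; apply: subgroup_prod => // j sj; rewrite Fs21 // mem_cat sj ?orbT.
have Fi : H (F i) by rewrite Fs ?mem_head.
rewrite big_cons big_cat big_cons /= !mulrA.
apply: (@abeq_trans (F i * \prod_(j <- s21) F j * \prod_(j <- s22) F j)).
- by rewrite !subgroupM.
- rewrite -mulrA -big_cat; apply: abeq_mull => //; last exact: IHs.
  by rewrite big_cat subgroupM.
- by apply: abeq_mulr => //; [rewrite subgroupM | apply: abeq_mulC].
Qed.

Lemma abeq_prodM (s : seq I) : {in s, forall i, H (F i)} -> {in s, forall i, H (G i)} ->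
  abeq H (\prod_(i <- s) (F i * G i)) (\prod_(i <- s) F i * \prod_(i <- s) G i).
Proof.
elim: s => [|i s IHs] Fs Gs; first by rewrite !big_nil mulr1; exact: abeq_refl (subgroup1 gH).
have Fs' : {in s, forall j, H (F j)} by move=> j sj; rewrite Fs // inE sj orbT.
have Gs' : {in s, forall j, H (G j)} by move=> j sj; rewrite Gs // inE sj orbT.
have [Fi Gi] : H (F i) /\ H (G i) by rewrite Fs ?Gs ?mem_head.
have [HP HQ] : H (\prod_(j <- s) F j) /\ H (\prod_(j <- s) G j).
  by split; apply: subgroup_prod.
rewrite !big_cons.
apply: (@abeq_trans (F i * G i * (\prod_(j <- s) F j * \prod_(j <- s) G j))).
- by rewrite !subgroupM.
- by apply: abeq_mull; rewrite ?subgroupM //; exact: IHs.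
rewrite -!mulrA; apply: abeq_mull; rewrite ?subgroupM // !mulrA.
by apply: abeq_mulr; rewrite ?subgroupM //; exact: abeq_mulC.
Qed.

End Products.

Lemma abeq_prod_mulV (I : eqType) (s : seq I) (F : I -> mat) : {in s, forall i, H (F i)} ->
  abeq H (\prod_(i <- s) F i * \prod_(i <- s) (F i)^-1) 1.
Proof.
move=> Fs; have FVs : {in s, forall i, H (F i)^-1} by move=> i /Fs /(subgroupV gH).
have E : \prod_(i <- s) (F i * (F i)^-1) = 1.
  by rewrite big1_seq // => i /andP [_ /Fs /(subgroup_unit gH) /mulrV].
rewrite -[X in abeq H _ X]E; apply: abeq_sym; last exact: abeq_prodM.
- by apply: subgroup_prod => // i si; rewrite subgroupM ?Fs ?FVs.
- by rewrite subgroupM ?subgroup_prod.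
Qed.

Lemma abeq_prod_coboundary (I J : eqType) (b : seq I) (a : seq J) (h : I -> mat) (f : J -> mat)
    (sigma : I -> J) (tau : I -> I) :
  perm_eq (map sigma b) a -> perm_eq (map tau b) b ->
  {in b, forall i, H (h i)} -> {in a, forall j, H (f j)} ->
  abeq H (\prod_(i <- b) (h i * (f (sigma i) * (h (tau i))^-1))) (\prod_(j <- a) f j).
Proof.
move=> sigma_b tau_b Hh Hf; pose hV i := (h i)^-1.
have HhV i : i \in b -> H (hV i) by move=> /Hh /(subgroupV gH).
have Hfs i : i \in b -> H (f (sigma i)) by move=> b_i; rewrite Hf // -(perm_mem sigma_b) map_f.
have HhVt i : i \in b -> H (hV (tau i)) by move=> b_i; rewrite HhV // -(perm_mem tau_b) map_f.
have [Ph PhV Pf] : [/\ H (\prod_(i <- b) h i), H (\prod_(i <- b) hV i) & H (\prod_(j <- a) f j)].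
  by split; apply: subgroup_prod.
have [Pfs PhVt] : H (\prod_(i <- b) f (sigma i)) /\ H (\prod_(i <- b) hV (tau i)).
  by split; apply: subgroup_prod.
have HfhV i : i \in b -> H (f (sigma i) * hV (tau i)) by move=> b_i; rewrite subgroupM ?Hfs ?HhVt.
apply: (abeq_trans _ (abeq_prodM Hh HfhV)); first by rewrite subgroupM ?subgroup_prod.
apply: (@abeq_trans (\prod_(i <- b) h i * (\prod_(j <- a) f j * \prod_(i <- b) hV i))).
- by rewrite !subgroupM.
- apply: abeq_mull; rewrite ?subgroupM //.
  apply: (abeq_trans _ (abeq_prodM Hfs HhVt)); first by rewrite subgroupM.
  apply: abeqM => //.
  + by rewrite -(big_map sigma xpredT f); apply: abeq_perm => // _ /mapP [i b_i ->]; apply: Hfs.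
  + by rewrite -(big_map tau xpredT hV); apply: abeq_perm => // _ /mapP [i b_i ->]; apply: HhVt.
apply: (@abeq_trans (\prod_(j <- a) f j * (\prod_(i <- b) h i * \prod_(i <- b) hV i))).
- by rewrite !subgroupM.
- by rewrite !mulrA; apply: abeq_mulr; rewrite ?subgroupM //; apply: abeq_mulC.
rewrite -[X in abeq H _ X]mulr1; apply: abeq_mull; rewrite ?subgroup1 //.
exact: abeq_prod_mulV.
Qed.

End Abelianization.

Section Transfer.

Variables G H : pred mat.
Hypotheses (gG : is_subgroup G) (gH : is_subgroup H).

Definition rtransversal (ts : seq mat) :=
  [/\ {in ts, forall t, G t}, uniq ts,
      (forall g, G g -> exists2 t, t \in ts & H (g * t^-1)) &
      {in ts &, forall t t', H (t * t'^-1) -> t = t'}].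

Lemma is_rtransversalP ts : is_rtransversal G H ts -> rtransversal ts.
Proof.
move=> [Gts cover].
have Hts i : (i < size ts)%N -> H (nth 1 ts i * (nth 1 ts i)^-1).
  by move=> lt_i; rewrite mulrV ?subgroup1 ?(subgroup_unit gG) ?Gts ?mem_nth.
have coset_inj i j : (i < size ts)%N -> (j < size ts)%N ->
    H (nth 1 ts i * (nth 1 ts j)^-1) -> i = j.
  move=> lt_i lt_j Hij; have [k [_ uniq_k]] := cover _ (Gts _ (mem_nth 1 lt_i)).
  by rewrite -(uniq_k i) ?(uniq_k j) ?Hts.
split=> //.
- apply/(uniqP 1) => i j lt_i lt_j eq_ij.
  by apply: coset_inj; rewrite // eq_ij Hts.
- by move=> g /cover [i [[lt_i Hgi] _]]; exists (nth 1 ts i); rewrite ?mem_nth.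
- move=> t t' ts_t ts_t'; rewrite -(nth_index 1 ts_t) -(nth_index 1 ts_t') => Htt'.
  by rewrite (coset_inj _ _ _ _ Htt') ?index_mem.
Qed.

Lemma rcoset_sym x y : G x -> G y -> H (x * y^-1) -> H (y * x^-1).
Proof.
move=> Gx Gy /(subgroupV gH).
by rewrite invrM ?unitrV ?(subgroup_unit gG) // invrK.
Qed.

Lemma rcoset_trans y x z : G y -> H (x * y^-1) -> H (y * z^-1) -> H (x * z^-1).
Proof.
move=> Gy Hxy Hyz.
by rewrite -(divrK (subgroup_unit gG Gy) x) -(mulrA _ y) subgroupM.
Qed.

Definition coset_rep (ts : seq mat) (x : mat) := nth 1 ts (find (fun u => H (x * u^-1)) ts).

Definition transfer_factor ts g t := t * g * (coset_rep ts (t * g))^-1.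

Lemma transferE ts g : transfer H ts g = \prod_(t <- ts) transfer_factor ts g t.
Proof. by []. Qed.

Section OneTransversal.

Variable ts : seq mat.
Hypothesis rts : rtransversal ts.

Lemma rtransversal_mem t : t \in ts -> G t. Proof. by case: rts => + _ _ _; apply. Qed.

Lemma coset_rep_mem x : G x -> coset_rep ts x \in ts.
Proof.
case: rts => _ _ cover _ /cover [t ts_t Hxt].
by rewrite /coset_rep mem_nth // -has_find; apply/hasP; exists t.
Qed.

Lemma coset_repG x : G x -> G (coset_rep ts x).
Proof. by move=> /coset_rep_mem /rtransversal_mem. Qed.

Lemma coset_repP x : G x -> H (x * (coset_rep ts x)^-1).
Proof.
case: rts => _ _ cover _ /cover [t ts_t Hxt].
by apply: (nth_find 1 (a := fun u => H (x * u^-1))); apply/hasP; exists t.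
Qed.

Lemma coset_rep_eq x u : G x -> u \in ts -> H (x * u^-1) -> coset_rep ts x = u.
Proof.
move=> Gx ts_u Hxu; case: rts => _ _ _ /(_ _ _ (coset_rep_mem Gx) ts_u); apply.
by apply: (rcoset_trans Gx) => //; apply: rcoset_sym; rewrite ?coset_repG ?coset_repP.
Qed.

Lemma coset_rep_rcoset x y : G x -> G y -> H (x * y^-1) -> coset_rep ts x = coset_rep ts y.
Proof.
move=> Gx Gy Hxy; apply: coset_rep_eq; rewrite ?coset_rep_mem //.
exact: rcoset_trans Gy Hxy (coset_repP Gy).
Qed.

Lemma map_coset_rep_uniq c : uniq c -> {in c, forall x, G x} ->
  {in c &, forall x y, H (x * y^-1) -> x = y} -> uniq (map (coset_rep ts) c).
Proof.
move=> uniq_c Gc Hc; rewrite map_inj_in_uniq // => x y c_x c_y eq_xy; apply: Hc => //.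
apply: (rcoset_trans (coset_repG (Gc _ c_x))); first exact: coset_repP (Gc _ c_x).
by rewrite eq_xy; apply: rcoset_sym; rewrite ?coset_repG ?Gc ?coset_repP ?Gc.
Qed.

Lemma map_coset_rep_perm c : uniq c -> {in c, forall x, G x} ->
  {in c &, forall x y, H (x * y^-1) -> x = y} -> (size ts <= size c)%N ->
  perm_eq (map (coset_rep ts) c) ts.
Proof.
move=> uniq_c Gc Hc le_ts_c; have uniq_rep := map_coset_rep_uniq uniq_c Gc Hc.
have sub_rep : {subset map (coset_rep ts) c <= ts}.
  by move=> _ /mapP [x c_x ->]; rewrite coset_rep_mem ?Gc.
have := uniq_min_size uniq_rep sub_rep; rewrite size_map => /(_ le_ts_c) [_ eq_rep].
by apply: uniq_perm => //; case: rts.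
Qed.

Lemma coset_rep_mulr_perm g : G g -> perm_eq [seq coset_rep ts (t * g) | t <- ts] ts.
Proof.
move=> Gg; have ug := subgroup_unit gG Gg.
rewrite (map_comp (coset_rep ts) (fun t => t * g)); apply: map_coset_rep_perm.
- rewrite map_inj_uniq; [by case: rts | exact: mulIr].
- by move=> _ /mapP [t ts_t ->] /=; rewrite (subgroupM gG) // rtransversal_mem.
- move=> _ _ /mapP [t ts_t ->] /mapP [t' ts_t' ->] /=.
  have ut' := subgroup_unit gG (rtransversal_mem ts_t').
  rewrite invrM // mulrA mulrK // => Htt'.
  by case: rts => _ _ _ distinct; rewrite (distinct t t').
- by rewrite size_map.
Qed.

Lemma transfer_factor_mem g t : G g -> t \in ts -> H (transfer_factor ts g t).
Proof. by move=> Gg ts_t; rewrite coset_repP // (subgroupM gG) // rtransversal_mem. Qed.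

Lemma transfer_mem g : G g -> H (transfer H ts g).
Proof. by move=> Gg; rewrite transferE subgroup_prod // => t; apply: transfer_factor_mem. Qed.

Lemma transfer1 : transfer H ts 1 = 1.
Proof.
rewrite transferE big1_seq // => t /andP [_ ts_t]; have Gt := rtransversal_mem ts_t.
by rewrite /transfer_factor mulr1 (coset_rep_eq Gt ts_t) ?mulrV ?subgroup1 ?(subgroup_unit gG).
Qed.

Lemma transfer_factorM x y t : G x -> G y -> t \in ts ->
  transfer_factor ts (x * y) t =
  transfer_factor ts x t * transfer_factor ts y (coset_rep ts (t * x)).
Proof.
move=> Gx Gy ts_t; have Gtx : G (t * x) by rewrite (subgroupM gG) // rtransversal_mem.
have Grep := coset_repG Gtx.
rewrite /transfer_factor (@coset_rep_rcoset (t * (x * y)) (coset_rep ts (t * x) * y)).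
- by rewrite !mulrA divrK // (subgroup_unit gG).
- by rewrite mulrA (subgroupM gG).
- exact: (subgroupM gG).
by rewrite invrM ?(subgroup_unit gG) // !mulrA mulrK ?(subgroup_unit gG) // coset_repP.
Qed.

Lemma transferM x y : G x -> G y ->
  abeq H (transfer H ts (x * y)) (transfer H ts x * transfer H ts y).
Proof.
move=> Gx Gy; pose rx t := coset_rep ts (t * x).
have ts_rx t : t \in ts -> rx t \in ts.
  by move=> ts_t; rewrite coset_rep_mem // (subgroupM gG) // rtransversal_mem.
have Hfx t : t \in ts -> H (transfer_factor ts x t) by exact: transfer_factor_mem.
have Hfy t : t \in ts -> H (transfer_factor ts y (rx t)).
  by move=> /ts_rx; exact: transfer_factor_mem.
rewrite !transferE (eq_big_seq _ (fun t => transfer_factorM Gx Gy)).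
apply: (abeq_trans gH _ (abeq_prodM gH Hfx Hfy)).
  by rewrite (subgroupM gH) ?(subgroup_prod gH).
apply: (abeq_mull gH); rewrite ?(subgroup_prod gH) //.
  by move=> t; exact: transfer_factor_mem.
rewrite -(big_map rx xpredT); apply: (abeq_perm gH) => //; first exact: coset_rep_mulr_perm.
by move=> _ /mapP [t ts_t ->]; apply: transfer_factor_mem; rewrite ?ts_rx.
Qed.

Lemma transfer_prod (I : eqType) (s : seq I) (F : I -> mat) : {in s, forall i, G (F i)} ->
  abeq H (transfer H ts (\prod_(i <- s) F i)) (\prod_(i <- s) transfer H ts (F i)).
Proof.
elim: s => [|i s IHs] Fs; first by rewrite !big_nil transfer1; exact: abeq_refl (subgroup1 gH).
have Fs' : {in s, forall j, G (F j)} by move=> j sj; rewrite Fs // inE sj orbT.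
have Fi : G (F i) by rewrite Fs ?mem_head.
rewrite !big_cons; apply: (abeq_trans gH _ (transferM Fi (subgroup_prod gG Fs'))).
- by rewrite (subgroupM gH) ?transfer_mem // subgroup_prod.
- apply: (abeq_mull gH); rewrite ?transfer_mem ?(subgroup_prod gH) //; last exact: IHs.
  by move=> j /Fs' /transfer_mem.
Qed.

Lemma rtransversal_map f : (forall t, t \in ts -> G (f t)) ->
  (forall t, t \in ts -> H (t * (f t)^-1)) -> rtransversal (map f ts).
Proof.
case: rts => Gts uniq_ts cover dist Gf Hf.
have HfV t : t \in ts -> H (f t * t^-1).
  by move=> ts_t; apply: rcoset_sym; [apply: Gts | apply: Gf | apply: Hf].
have f_inj t t' : t \in ts -> t' \in ts -> H (f t * (f t')^-1) -> t = t'.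
  move=> ts_t ts_t' Hff; apply: dist => //.
  apply: (rcoset_trans (Gf _ ts_t) (Hf _ ts_t)).
  exact: rcoset_trans (Gf _ ts_t') Hff (HfV _ ts_t').
split.
- by move=> _ /mapP [t ts_t ->]; apply: Gf.
- rewrite map_inj_in_uniq // => t t' ts_t ts_t' eq_f; apply: f_inj => //.
  by rewrite eq_f mulrV ?(subgroup1 gH) // (subgroup_unit gG) ?Gf.
- move=> g /cover [t ts_t Hgt]; exists (f t); first exact: map_f.
  exact: rcoset_trans (Gts _ ts_t) Hgt (Hf _ ts_t).
- by move=> _ _ /mapP [t ts_t ->] /mapP [t' ts_t' ->] /f_inj ->.
Qed.

End OneTransversal.

Section TwoTransversals.

Variables a b : seq mat.
Hypotheses (ra : rtransversal a) (rb : rtransversal b).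

Lemma coset_rep_perm : perm_eq (map (coset_rep a) b) a.
Proof.
have [[Ga uniq_a _ dist_a] [Gb uniq_b _ dist_b]] := (ra, rb).
apply: map_coset_rep_perm => //.
have sub_rep : {subset map (coset_rep b) a <= b}.
  by move=> _ /mapP [t a_t ->]; rewrite coset_rep_mem ?Ga.
by rewrite -(size_map (coset_rep b)) uniq_leq_size ?map_coset_rep_uniq.
Qed.

Lemma transfer_factor_change g t : G g -> t \in b ->
  let h u := u * (coset_rep a u)^-1 in
  transfer_factor b g t =
  h t * (transfer_factor a g (coset_rep a t) * (h (coset_rep b (t * g)))^-1).
Proof.
move=> Gg b_t h; have Gt := rtransversal_mem rb b_t.
have Gtg : G (t * g) by rewrite (subgroupM gG).
have Gb_tg := coset_repG rb Gtg; have Ga_t := coset_repG ra Gt.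
have [ut ua_t] := (subgroup_unit gG Gt, subgroup_unit gG Ga_t).
have [ub_tg uab_tg] := (subgroup_unit gG Gb_tg, subgroup_unit gG (coset_repG ra Gb_tg)).
rewrite /transfer_factor /h (@coset_rep_rcoset _ ra (coset_rep a t * g) (coset_rep b (t * g))) //.
- by rewrite invrM ?unitrV // invrK !mulrA !divrK.
- by rewrite (subgroupM gG).
have -> : coset_rep a t * g * (coset_rep b (t * g))^-1 =
          (t * (coset_rep a t)^-1)^-1 * (t * g * (coset_rep b (t * g))^-1).
  by rewrite invrM ?unitrV // invrK !mulrA divrK.
by rewrite (subgroupM gH) ?(subgroupV gH) ?coset_repP.
Qed.

Lemma transfer_indep g : G g -> abeq H (transfer H b g) (transfer H a g).
Proof.
move=> Gg; rewrite !transferE (eq_big_seq _ (fun t => transfer_factor_change Gg)).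
apply: (abeq_prod_coboundary gH coset_rep_perm (coset_rep_mulr_perm rb Gg)).
- by move=> t /(rtransversal_mem rb) /(coset_repP ra).
- by move=> u; apply: transfer_factor_mem.
Qed.

End TwoTransversals.

End Transfer.

Lemma rtransversal_restrict (G H K H' : pred mat) ts :
  is_subgroup K -> subpred K G -> rtransversal G H ts -> {in ts, forall t, K t} ->
  (forall x, K x -> H' x = H x) -> rtransversal K H' ts.
Proof.
move=> gK sKG [_ uniq_ts cover dist] Kts eqH'; split=> //.
- move=> g Kg; have [t ts_t Hgt] := cover g (sKG _ Kg).
  by exists t; rewrite // eqH' // (subgroup_mulV gK) // Kts.
- move=> t t' ts_t ts_t'; rewrite eqH' ?(subgroup_mulV gK) ?Kts //; exact: dist.
Qed.

Section TransferTransitivity.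

Variables G H K : pred mat.
Hypotheses (gG : is_subgroup G) (gH : is_subgroup H) (gK : is_subgroup K).
Hypotheses (sHG : subpred H G) (sKH : subpred K H).

Definition coset_pairs (ts us : seq mat) := [seq u * t | t <- ts, u <- us].

Lemma rtransversal_pairs ts us : rtransversal G H ts -> rtransversal H K us ->
  rtransversal G K (coset_pairs ts us).
Proof.
move=> [Gts uniq_ts cover_ts dist_ts] [Hus uniq_us cover_us dist_us].
have Gus u : u \in us -> G u by move/Hus/sHG.
have [uts uus] : {in ts, forall t, t \is a GRing.unit} /\ {in us, forall u, u \is a GRing.unit}.
  by split=> x => [/Gts | /Gus] /(subgroup_unit gG).
have dist_t t t' u u' : t \in ts -> t' \in ts -> u \in us -> u' \in us ->
    H ((u * t) * (u' * t')^-1) -> t = t'.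
  move=> ts_t ts_t' us_u us_u' Hut; apply: dist_ts => //.
  have ut' := uts _ ts_t'; have uu := uus _ us_u; have uu' := uus _ us_u'.
  have -> : t * t'^-1 = u^-1 * ((u * t) * (u' * t')^-1) * u'.
    by rewrite invrM // !mulrA mulVr // mul1r divrK.
  apply: (subgroupM gH); last exact: Hus.
  by apply: (subgroupM gH) Hut; apply: (subgroupV gH); apply: Hus.
split.
- move=> _ /allpairsP [[t u] /= [ts_t us_u ->]].
  by apply: (subgroupM gG); [apply: Gus | apply: Gts].
- apply: allpairs_uniq => // [[t u] [t' u']] /allpairsP [[t1 u1] /= [ts1 us1 [-> ->]]].
  move=> /allpairsP [[t2 u2] /= [ts2 us2 [-> ->]]] /= eq_ut.
  have u2t2 : u2 * t2 \is a GRing.unit.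
    by apply: (subgroup_unit gG); apply: (subgroupM gG); [apply: Gus | apply: Gts].
  have eq_t : t1 = t2 by apply: (dist_t _ _ u1 u2) => //; rewrite eq_ut mulrV // (subgroup1 gH).
  by subst t2; congr (_, _); apply: (mulIr (uts _ ts1)).
- move=> g /cover_ts [t ts_t /cover_us [u us_u Hgu]].
  by exists (u * t); [exact: allpairs_f | rewrite invrM ?(uts _ ts_t) ?(uus _ us_u) // mulrA].
- move=> _ _ /allpairsP [[t u] /= [ts_t us_u ->]] /allpairsP [[t' u'] /= [ts_t' us_u' ->]] Kut.
  have eq_t := dist_t _ _ _ _ ts_t ts_t' us_u us_u' (sKH Kut); subst t'.
  have ut := uts _ ts_t; have uu' := uus _ us_u'.
  by congr (_ * _); apply: dist_us => //; move: Kut; rewrite invrM // mulrA mulrK.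
Qed.

Lemma transfer_trans ts us g : rtransversal G H ts -> rtransversal H K us -> G g ->
  abeq K (transfer K us (transfer H ts g)) (transfer K (coset_pairs ts us) g).
Proof.
move=> rts rus Gg; have rvs := rtransversal_pairs rts rus.
have Hf t : t \in ts -> H (transfer_factor H ts g t).
  by move=> ts_t; apply: (transfer_factor_mem gG rts Gg ts_t).
suff -> : transfer K (coset_pairs ts us) g =
          \prod_(t <- ts) transfer K us (transfer_factor H ts g t).
  by have := transfer_prod gH gK rus Hf; rewrite -transferE.
rewrite transferE big_allpairs_dep; apply: eq_big_seq => t ts_t /=.
rewrite transferE; apply: eq_big_seq => u us_u.
have Gt := rtransversal_mem rts ts_t; have Hu := rtransversal_mem rus us_u.
have Gtg : G (t * g) by apply: (subgroupM gG).
have Huf : H (u * transfer_factor H ts g t) by apply: (subgroupM gH) (Hf _ ts_t).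
have Grep := coset_repG rts Gtg.
have Hrep := coset_repG rus Huf.
have [uGrep uHrep] := (subgroup_unit gG Grep, subgroup_unit gG (sHG Hrep)).
rewrite /transfer_factor (@coset_rep_eq _ _ gG gK _ rvs (u * t * g)
  (coset_rep K us (u * transfer_factor H ts g t) * coset_rep H ts (t * g))).
- by rewrite invrM // /transfer_factor !mulrA.
- by apply: (subgroupM gG) => //; apply: (subgroupM gG) => //; apply: sHG.
- by apply: allpairs_f; [apply: (coset_rep_mem rts Gtg) | apply: (coset_rep_mem rus Huf)].
have := coset_repP rus Huf.
by rewrite invrM // /transfer_factor !mulrA.
Qed.

End TransferTransitivity.

Lemma transfer_chain (G H1 H2 K : pred mat) ts1 us1 ts2 us2 g :
  is_subgroup G -> is_subgroup H1 -> is_subgroup H2 -> is_subgroup K ->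
  subpred H1 G -> subpred K H1 -> subpred H2 G -> subpred K H2 ->
  rtransversal G H1 ts1 -> rtransversal H1 K us1 ->
  rtransversal G H2 ts2 -> rtransversal H2 K us2 -> G g ->
  abeq K (transfer K us1 (transfer H1 ts1 g)) (transfer K us2 (transfer H2 ts2 g)).
Proof.
move=> gG gH1 gH2 gK sH1G sKH1 sH2G sKH2 rts1 rus1 rts2 rus2 Gg.
have r1 := rtransversal_pairs gG gH1 sH1G sKH1 rts1 rus1.
have r2 := rtransversal_pairs gG gH2 sH2G sKH2 rts2 rus2.
have [K1 K2] := (transfer_mem gG gK r1 Gg, transfer_mem gG gK r2 Gg).
apply: (abeq_trans gK K1 (transfer_trans gG gH1 gK sH1G sKH1 rts1 rus1 Gg)).
apply: (abeq_trans gK K2 (transfer_indep gG gK r2 r1 Gg)).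
apply: (abeq_sym gK) (transfer_trans gG gH2 gK sH2G sKH2 rts2 rus2 Gg) => //.
apply: (transfer_mem gH2 gK rus2 (transfer_mem gG gH2 rts2 Gg)).
Qed.

Lemma ord2_cases (i : 'I_2) : i = 0 \/ i = 1.
Proof. by case: i => [[|[|k]] lt_i] //; [left | right]; apply: val_inj. Qed.

Lemma mx2_ext (A B : mat) :
  ea A = ea B -> eb A = eb B -> ec A = ec B -> ed A = ed B -> A = B.
Proof.
by move=> *; apply/matrixP => i j; case: (ord2_cases i) => ->; case: (ord2_cases j) => ->.
Qed.

Lemma sum_ord2 (F : 'I_2 -> int) : \sum_(k < 2) F k = F 0 + F 1.
Proof. by rewrite !big_ord_recl big_ord0 addr0; congr (_ + F _); apply: val_inj. Qed.

Lemma eaM (A B : mat) : ea (A * B) = ea A * ea B + eb A * ec B.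
Proof. by rewrite /ea !mxE sum_ord2. Qed.
Lemma ebM (A B : mat) : eb (A * B) = ea A * eb B + eb A * ed B.
Proof. by rewrite /eb !mxE sum_ord2. Qed.
Lemma ecM (A B : mat) : ec (A * B) = ec A * ea B + ed A * ec B.
Proof. by rewrite /ec !mxE sum_ord2. Qed.
Lemma edM (A B : mat) : ed (A * B) = ec A * eb B + ed A * ed B.
Proof. by rewrite /ed !mxE sum_ord2. Qed.

Definition mx2 (a b c d : int) : mat :=
  \matrix_(i, j) if i == 0 then if j == 0 then a else b else if j == 0 then c else d.

Lemma mx2E a b c d :
  [/\ ea (mx2 a b c d) = a, eb (mx2 a b c d) = b, ec (mx2 a b c d) = c & ed (mx2 a b c d) = d].
Proof. by rewrite /ea /eb /ec /ed !mxE. Qed.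

Lemma entries1 : [/\ ea 1 = 1, eb 1 = 0, ec 1 = 0 & ed 1 = 1].
Proof. by rewrite /ea /eb /ec /ed !mxE. Qed.

Lemma det_mx2 (A : mat) : \det A = ea A * ed A - eb A * ec A.
Proof.
rewrite (expand_det_row A 0) sum_ord2 /cofactor !det_mx11 !mxE /=.
have [-> ->] : lift ord0 ord0 = 1 :> 'I_2 /\ lift 1 0 = 0 :> 'I_2 by split; apply: val_inj.
by rewrite expr0 expr1 mul1r mulN1r mulrN.
Qed.

Lemma SL2E A : SL2 A = (ea A * ed A - eb A * ec A == 1).
Proof. by rewrite /SL2 det_mx2. Qed.

Lemma SL2_unit A : SL2 A -> A \is a GRing.unit.
Proof. by move=> /eqP detA; rewrite -[_ \is a _]/(A \in unitmx) unitmxE detA unitr1. Qed.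

Lemma SL2_inv A : SL2 A -> A^-1 = mx2 (ed A) (- eb A) (- ec A) (ea A).
Proof.
move=> SL2A; have uA := SL2_unit SL2A; move: SL2A; rewrite SL2E => /eqP detA.
have [ea' eb' ec' ed'] := mx2E (ed A) (- eb A) (- ec A) (ea A).
suff inv_mul : mx2 (ed A) (- eb A) (- ec A) (ea A) * A = 1 by rewrite -[LHS]mul1r -inv_mul mulrK.
have [ea1 eb1 ec1 ed1] := entries1.
by apply: mx2_ext; rewrite ?eaM ?ebM ?ecM ?edM ?ea' ?eb' ?ec' ?ed' ?ea1 ?eb1 ?ec1 ?ed1 -?detA; ring.
Qed.

Lemma entriesV A : SL2 A ->
  [/\ ea A^-1 = ed A, eb A^-1 = - eb A, ec A^-1 = - ec A & ed A^-1 = ea A].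
Proof. by move/SL2_inv ->; apply: mx2E. Qed.

Lemma is_subgroup_SL2 : is_subgroup SL2.
Proof.
split.
- by rewrite /SL2 det1.
- by move=> A B /eqP detA /eqP detB; rewrite /SL2 -[A * B]/(A *m B) det_mulmx detA detB mulr1.
- move=> A SL2A; rewrite SL2E; have [-> -> -> ->] := entriesV SL2A.
  by move: SL2A; rewrite SL2E => /eqP <-; apply/eqP; ring.
- exact: SL2_unit.
Qed.

Lemma is_subgroup_SL2_sep (G P : pred mat) : (forall A, G A = SL2 A && P A) -> P 1 ->
  (forall A B, SL2 A -> SL2 B -> P A -> P B -> P (A * B)) ->
  (forall A, SL2 A -> P A -> P A^-1) -> is_subgroup G.
Proof.
move=> GE P1 PM PV; have gSL2 := is_subgroup_SL2; split=> [|A B|A|A]; rewrite ?GE.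
- by rewrite (subgroup1 gSL2).
- by move=> /andP [SA PA] /andP [SB PB]; rewrite (subgroupM gSL2) ?PM.
- by move=> /andP [SA PA]; rewrite (subgroupV gSL2) ?PV.
- by move=> /andP [SA _]; apply: SL2_unit.
Qed.

Lemma Gamma1E M A : Gamma1 M A =
  [&& SL2 A, (M%:Z %| ec A)%Z, (M%:Z %| ea A - 1)%Z & (M%:Z %| ed A - 1)%Z].
Proof. by rewrite /Gamma1 !eqz_mod_dvd. Qed.

Lemma is_subgroup_Gamma1 M : is_subgroup (Gamma1 M).
Proof.
have [ea1 _ ec1 ed1] := entries1.
apply: (is_subgroup_SL2_sep (Gamma1E M)) => [|A B _ _ /and3P [cA aA dA] /and3P [cB aB dB] | A SA].
- by rewrite ea1 ec1 ed1 subrr dvdz0.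
- rewrite ecM eaM edM; apply/and3P; split.
  + by apply: rpredD; [apply: dvdz_mulr | apply: dvdz_mull].
  + have -> : ea A * ea B + eb A * ec B - 1 = (ea A - 1) * ea B + (ea B - 1) + eb A * ec B by ring.
    by apply: rpredD; [apply: rpredD => //; apply: dvdz_mulr | apply: dvdz_mull].
  + have -> : ec A * eb B + ed A * ed B - 1 = ec A * eb B + (ed A - 1) * ed B + (ed B - 1) by ring.
    by apply: rpredD => //; apply: rpredD; apply: dvdz_mulr.
- by have [-> _ -> ->] := entriesV SA; case/and3P=> cA aA dA; rewrite rpredN cA aA dA.
Qed.

Lemma is_subgroup_Gamma0 M : is_subgroup (Gamma0 M).
Proof.
have [_ _ ec1 _] := entries1.
apply: (is_subgroup_SL2_sep (P := fun A => (M%:Z %| ec A)%Z)) => // [|A B _ _ cA cB | A SA].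
- by rewrite ec1 dvdz0.
- by rewrite ecM; apply: rpredD; [apply: dvdz_mulr | apply: dvdz_mull].
- by have [_ _ -> _] := entriesV SA; rewrite rpredN.
Qed.

Lemma is_subgroup_Gamma0up2 : is_subgroup Gamma0up2.
Proof.
have [_ eb1 _ _] := entries1.
apply: (is_subgroup_SL2_sep (P := fun A => (2 %| eb A)%Z)) => // [|A B _ _ bA bB | A SA].
- by rewrite eb1 dvdz0.
- by rewrite ebM; apply: rpredD; [apply: dvdz_mull | apply: dvdz_mulr].
- by have [_ -> _ _] := entriesV SA; rewrite rpredN.
Qed.

Lemma is_subgroup_Phi N r s : is_subgroup (Phi N r s).
Proof. exact: is_subgroupI (is_subgroup_Gamma1 _) (is_subgroup_Gamma0 _). Qed.

Lemma is_subgroup_capG02 G : is_subgroup G -> is_subgroup (capG02 G).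
Proof. by move=> gG; apply: is_subgroupI gG is_subgroup_Gamma0up2. Qed.

Lemma capG02_sub G : subpred (capG02 G) G. Proof. by move=> A /andP []. Qed.

Lemma capG02_Gamma0up2 G : subpred (capG02 G) Gamma0up2. Proof. by move=> A /andP []. Qed.

Lemma capG02S G H : subpred H G -> subpred (capG02 H) (capG02 G).
Proof. by move=> sHG A /andP [HA A02]; rewrite /capG02 A02 sHG. Qed.

Lemma mul_tmx_entry (X : mat) i j : (X *m tmx) i j = X i j * tdiag j.
Proof.
rewrite !mxE sum_ord2 !mxE.
by case: (ord2_cases j) => ->; rewrite /= ?mulr0 ?addr0 ?add0r.
Qed.

(* Since [t] is right-cancellable, [conjtE] characterizes [conjt] on Gamma^0(2). *)
Lemma tmx_rreg (X Y : mat) : X *m tmx = Y *m tmx -> X = Y.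
Proof.
move=> eqXY; apply/matrixP => i j; have := congr1 (fun M : mat => M i j) eqXY.
by rewrite !mul_tmx_entry; apply: mulIf; case: (ord2_cases j) => ->.
Qed.

Lemma conjtM A B : (2 %| eb A)%Z -> (2 %| eb B)%Z -> conjt (A * B) = conjt A * conjt B.
Proof.
move=> bA bB; have bAB : (2 %| eb (A * B))%Z.
  by rewrite ebM; apply: rpredD; [apply: dvdz_mull | apply: dvdz_mulr].
by apply: tmx_rreg; rewrite -conjtE // -mulmxA -conjtE // !mulmxA conjtE.
Qed.

Lemma conjt1 : conjt 1 = 1.
Proof.
have [_ eb1 _ _] := entries1.
by apply: tmx_rreg; rewrite -conjtE ?eb1 ?dvdz0 // mulmx1 mul1mx.
Qed.

Lemma det_conjt A : (2 %| eb A)%Z -> \det (conjt A) = \det A.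
Proof.
move=> bA; have := congr1 determinant (conjtE bA); rewrite !det_mulmx mulrC.
have det_tmx : \det tmx = 2 by rewrite det_mx2 /ea /eb /ec /ed !mxE.
by rewrite det_tmx => /(mulIf (_ : 2 != 0)) ->.
Qed.

Lemma SL2_conjt A : Gamma0up2 A -> SL2 (conjt A).
Proof. by case/andP=> SA bA; rewrite /SL2 det_conjt. Qed.

Lemma conjtV A : Gamma0up2 A -> conjt A^-1 = (conjt A)^-1.
Proof.
move=> A02; have A02V := subgroupV is_subgroup_Gamma0up2 A02.
have uA := SL2_unit (SL2_conjt A02).
have inv_mul : conjt A * conjt A^-1 = 1.
  case/andP: A02 => SA bA; case/andP: A02V => _ bAV.
  by rewrite -conjtM // mulrV ?conjt1 // SL2_unit.
by rewrite -[LHS]mul1r -(mulVr uA) -mulrA inv_mul mulr1.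
Qed.

Lemma conjt_entries A :
  [/\ ea (conjt A) = ea A, ec (conjt A) = 2 * ec A & ed (conjt A) = ed A].
Proof. by rewrite /ea /ec /ed !mxE /tdiag /= mul1r !divz1 mulKz. Qed.

Lemma Gamma1_conjt M A : capG02 (Gamma1 M) A -> Gamma1 M (conjt A).
Proof.
case/andP; rewrite !Gamma1E => /and4P [_ cA aA dA] A02; have [-> -> ->] := conjt_entries A.
by apply/and4P; split; [exact: SL2_conjt | exact: dvdz_mull | |].
Qed.

Lemma Gamma0_conjt M A : capG02 (Gamma0 M) A -> Gamma0 M (conjt A).
Proof.
case/andP=> /andP [_ cA] A02; rewrite /Gamma0 SL2_conjt //=.
by have [_ -> _] := conjt_entries A; exact: dvdz_mull.
Qed.

Lemma Phi_conjt N r s A : capG02 (Phi N r s) A -> Phi N r s (conjt A).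
Proof.
by case/andP=> /andP [G1A G0A] A02; rewrite /Phi Gamma1_conjt ?Gamma0_conjt /capG02 ?G1A ?G0A.
Qed.

Lemma conjt_prod (I : eqType) (s : seq I) (F : I -> mat) : {in s, forall i, Gamma0up2 (F i)} ->
  conjt (\prod_(i <- s) F i) = \prod_(i <- s) conjt (F i).
Proof.
elim: s => [|i s IHs] F02; first by rewrite !big_nil conjt1.
have F02' : {in s, forall j, Gamma0up2 (F j)} by move=> j sj; rewrite F02 // inE sj orbT.
have /andP [_ bFi] : Gamma0up2 (F i) by rewrite F02 ?mem_head.
have /andP [_ bP] := subgroup_prod is_subgroup_Gamma0up2 F02'.
by rewrite !big_cons conjtM // IHs.
Qed.

Section ConjugationByT.

Variables G H P K : pred mat.
Hypotheses (gG : is_subgroup G) (gH : is_subgroup H) (gP : is_subgroup P) (gK : is_subgroup K).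
Hypotheses (sP02 : subpred P Gamma0up2) (sK02 : subpred K Gamma0up2).
Hypotheses (conjtP : forall x, P x -> G (conjt x)) (conjtK : forall x, K x -> H (conjt x)).

Let conjtM02 x y : Gamma0up2 x -> Gamma0up2 y -> conjt (x * y) = conjt x * conjt y.
Proof. by move=> /andP [_ bx] /andP [_ by']; apply: conjtM. Qed.

Lemma commsub_conjt z : commsub K z -> commsub H (conjt z).
Proof.
elim=> {z} [x y Kx Ky | | x y cx Hx cy Hy | x cx Hx].
- have [Kx' Ky'] := (subgroupV gK Kx, subgroupV gK Ky).
  rewrite -[_ *m _]/(x * y * x^-1 * y^-1) !conjtM02 ?conjtV ?sK02 ?(subgroupM gK) //.
  by apply: cs_comm; apply: conjtK.
- by rewrite conjt1; apply: cs_one.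
- have [Kx Ky] := (commsub_mem gK cx, commsub_mem gK cy).
  by rewrite -[_ *m _]/(x * y) conjtM02 ?sK02 //; apply: cs_mul.
- by rewrite -[invmx x]/(x^-1) conjtV ?sK02 ?(commsub_mem gK cx) //; apply: cs_inv.
Qed.

Lemma abeq_conjt x y : K x -> K y -> abeq K x y -> abeq H (conjt x) (conjt y).
Proof.
move=> Kx Ky /commsub_conjt; rewrite /abeq -[_ *m invmx _]/(x * y^-1).
by rewrite conjtM02 ?conjtV ?sK02 ?(subgroupV gK).
Qed.

Lemma conjt_transfer ws y : rtransversal P K ws -> rtransversal G H (map conjt ws) -> P y ->
  conjt (transfer K ws y) = transfer H (map conjt ws) (conjt y).
Proof.
move=> rws rws' Py.
rewrite !transferE big_map conjt_prod => [|t ws_t]; last first.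
  by apply: sK02; apply: (transfer_factor_mem gP rws Py).
apply: eq_big_seq => t ws_t; have Pt := rtransversal_mem rws ws_t.
have Pty : P (t * y) by apply: (subgroupM gP).
have Prep := coset_repG rws Pty.
rewrite /transfer_factor !conjtM02 ?conjtV ?sP02 ?(subgroupM gP) ?(subgroupV gP) //.
congr (_ * _ * _^-1); symmetry; apply: (coset_rep_eq gG gH rws').
- by rewrite -conjtM02 ?sP02 //; apply: conjtP.
- by apply: map_f; apply: (coset_rep_mem rws Pty).
rewrite -conjtM02 ?sP02 // -conjtV ?sP02 // -conjtM02 ?sP02 ?(subgroupV gP) //.
exact: conjtK (coset_repP rws Pty).
Qed.

End ConjugationByT.

Section Atkin.

Variables N r s : nat.
Hypotheses (N_odd : odd N) (s_gt0 : (0 < s)%N) (s_le_r : (s <= r)%N).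

Local Notation Gam := (Gamma1 (N * 2 ^ r)).
Local Notation Phirs := (Phi N r s).

Lemma dvdz_Ns_Nr : ((N * 2 ^ s)%N%:Z %| (N * 2 ^ r)%N%:Z)%Z.
Proof. by rewrite dvdzE /= dvdn_mul // dvdn_exp2l. Qed.

Lemma Gamma1_sub_Phi : subpred Gam Phirs.
Proof.
move=> A; rewrite /Phi /Gamma0 !Gamma1E => /and4P [SA cA aA dA].
have d2 : ((2 ^ r)%N%:Z %| (N * 2 ^ r)%N%:Z)%Z by rewrite dvdzE /= dvdn_mull.
by rewrite SA !(dvdz_trans dvdz_Ns_Nr) // (dvdz_trans d2).
Qed.

Lemma Phi_SL2 A : Phirs A -> SL2 A.
Proof. by case/andP=> /andP []. Qed.

Lemma Phi_dvd_c A : Phirs A -> ((N * 2 ^ r)%N%:Z %| ec A)%Z.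
Proof.
rewrite /Phi Gamma1E => /andP [/and4P [_ cA _ _] /andP [_ c2A]].
rewrite PoszM Gauss_dvdz; last by rewrite coprimezE /= coprimeXr // coprimen2.
by rewrite c2A andbT; apply: dvdz_trans cA; rewrite dvdzE /= dvdn_mulr.
Qed.

Lemma Gamma1_mulV_of_ed x y : Phirs x -> Phirs y -> ed x = ed y -> Gam (x * y^-1).
Proof.
move=> Px Py eq_d; have [cx cy] := (Phi_dvd_c Px, Phi_dvd_c Py).
have [Sx Sy] := (Phi_SL2 Px, Phi_SL2 Py).
have [eaV ebV ecV edV] := entriesV Sy.
move: (Sx) (Sy); rewrite !SL2E => /eqP det_x /eqP det_y.
rewrite Gamma1E (subgroupM is_subgroup_SL2) ?(subgroupV is_subgroup_SL2) //=.
rewrite eaM ecM edM eaV ebV ecV edV; apply/and3P; split.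
- by apply: rpredD; [apply: dvdz_mulr | apply: dvdz_mull; rewrite rpredN].
- have -> : ea x * ed y + eb x * - ec y - 1 = eb x * (ec x - ec y) by rewrite -eq_d -det_x; ring.
  by apply: dvdz_mull; apply: rpredB.
- have -> : ec x * - eb y + ed x * ea y - 1 = eb y * (ec y - ec x) by rewrite eq_d -det_y; ring.
  by apply: dvdz_mull; apply: rpredB.
Qed.

Lemma Phi_dvd_ed A : Phirs A -> (2 %| ed A - 1)%Z.
Proof.
case/andP=> /and4P [_ _ _ dA] _; move: dA; rewrite eqz_mod_dvd; apply: dvdz_trans.
by rewrite dvdzE /= dvdn_mull // dvdn_exp.
Qed.

Definition Tpow (k : int) : mat := mx2 1 k 0 1.

Lemma Gamma1_Tpow M k : Gamma1 M (Tpow k).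
Proof.
rewrite /Tpow Gamma1E SL2E; have [-> -> -> ->] := mx2E 1 k 0 1.
by rewrite subrr dvdz0 mul1r mulr0 subr0.
Qed.

(* [Tpow (eb t) * t] has upper-right entry [b * (1 + d)], which is even as [d] is odd. *)
Lemma Phi_Tpow_eb t : Phirs t -> capG02 Phirs (Tpow (eb t) * t) /\ Gam (t * (Tpow (eb t) * t)^-1).
Proof.
move=> Pt; have [gGam gPhi] := (is_subgroup_Gamma1 (N * 2 ^ r), is_subgroup_Phi N r s).
have Gam_T := Gamma1_Tpow (N * 2 ^ r) (eb t).
have [uT ut] := (subgroup_unit gGam Gam_T, subgroup_unit gPhi Pt).
split; last by rewrite invrM // mulrA mulrV // mul1r (subgroupV gGam).
have PTt : Phirs (Tpow (eb t) * t) by apply: (subgroupM gPhi) Pt; apply: Gamma1_sub_Phi.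
rewrite /capG02 PTt /Gamma0up2 (Phi_SL2 PTt) /= ebM /Tpow.
have [-> -> _ _] := mx2E 1 (eb t) 0 1.
have -> : 1 * eb t + eb t * ed t = eb t * ((ed t - 1) + 2) by ring.
by apply: dvdz_mull; apply: rpredD; [apply: Phi_dvd_ed | apply: dvdzz].
Qed.

Lemma exists_rtransversal_Gamma0up2 ts : rtransversal Phirs Gam ts ->
  exists ws, [/\ rtransversal Phirs Gam ws, rtransversal (capG02 Phirs) (capG02 Gam) ws
               & rtransversal Phirs Gam (map conjt ws)].
Proof.
move=> rts; pose ws := map (fun t => Tpow (eb t) * t) ts.
have [gPhi gGam] := (is_subgroup_Phi N r s, is_subgroup_Gamma1 (N * 2 ^ r)).
have ws02 t : t \in ws -> capG02 Phirs t.
  by case/mapP=> u ts_u ->; case: (Phi_Tpow_eb (rtransversal_mem rts ts_u)).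
have rws : rtransversal Phirs Gam ws.
  apply: (rtransversal_map gPhi gGam rts) => t ts_t; have := Phi_Tpow_eb (rtransversal_mem rts ts_t).
    by case=> /andP [].
  by case.
exists ws; split=> //.
- apply: (rtransversal_restrict (is_subgroup_capG02 gPhi) _ rws ws02).
    by move=> x /andP [].
  by move=> x /andP [_ x02]; rewrite /capG02 x02 andbT.
- apply: (rtransversal_map gPhi gGam rws) => t ws_t; first exact: Phi_conjt (ws02 _ ws_t).
  apply: Gamma1_mulV_of_ed; first exact: (rtransversal_mem rws ws_t).
    exact: Phi_conjt (ws02 _ ws_t).
  by have [_ _ ->] := conjt_entries t.
Qed.

End Atkin.

Unset Implicit Arguments.

Theorem lemma3p6 (N r s : nat) (ts1 ts2 ts3 : seq 'M[int]_2) :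
  odd N -> (0 < N)%N -> (2 <= s)%N -> (s <= r)%N ->
  is_rtransversal (Phi N r s) (Gamma1 (N * 2 ^ r)) ts1 ->
  is_rtransversal (Phi N r s) (capG02 (Phi N r s)) ts2 ->
  is_rtransversal (Gamma1 (N * 2 ^ r)) (capG02 (Gamma1 (N * 2 ^ r))) ts3 ->
  forall g : 'M[int]_2, Phi N r s g ->
    abeq (Gamma1 (N * 2 ^ r))
      (transfer (Gamma1 (N * 2 ^ r)) ts1 (atkin (Phi N r s) ts2 g))
      (atkin (Gamma1 (N * 2 ^ r)) ts3 (transfer (Gamma1 (N * 2 ^ r)) ts1 g)).
Proof.
move=> N_odd _ s_ge2 s_le_r rt1 rt2 rt3 g Phi_g.
have s_gt0 : (0 < s)%N by apply: leq_trans s_ge2.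
have [gPhi gGam] := (is_subgroup_Phi N r s, is_subgroup_Gamma1 (N * 2 ^ r)).
have [gP gK] := (is_subgroup_capG02 gPhi, is_subgroup_capG02 gGam).
have sGamPhi := Gamma1_sub_Phi (N := N) s_le_r.
have r1 := is_rtransversalP gPhi gGam rt1.
have r2 := is_rtransversalP gPhi gP rt2.
have r3 := is_rtransversalP gGam gK rt3.
have [ws [rws rws02 rwsT]] := exists_rtransversal_Gamma0up2 N_odd s_gt0 s_le_r r1.
rewrite /atkin; set y := transfer (capG02 (Phi N r s)) ts2 g.
have Py : capG02 (Phi N r s) y := transfer_mem gPhi gP r2 Phi_g.
have Ky := transfer_mem gP gK rws02 Py.
have conjt_y := conjt_transfer gPhi gGam gP (@capG02_Gamma0up2 _) (@capG02_Gamma0up2 _)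
  (@Phi_conjt N r s) (@Gamma1_conjt _) rws02 rwsT Py.
apply: (abeq_trans gGam _ (transfer_indep gPhi gGam rwsT r1 (Phi_conjt Py))).
  by rewrite -conjt_y; apply: Gamma1_conjt.
rewrite -conjt_y; apply: (abeq_conjt gK (@capG02_Gamma0up2 _) (@Gamma1_conjt _) Ky).
  by apply: (transfer_mem gGam gK r3); apply: (transfer_mem gPhi gGam r1).
exact: transfer_chain gPhi gP gGam gK (@capG02_sub _) (capG02S sGamPhi) sGamPhi (@capG02_sub _)
  r2 rws02 r1 r3 Phi_g.
Qed.
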